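(* Let $X=\{\mathbf{x}_1,\ldots,\mathbf{x}_N\}\subset\mathbb{R}^n$, $\epsilon\ge0$, $\sigma$ a degree-compatible term ordering, and let $(\mathcal{O},G)$ be the output of the ABM algorithm with gradient-weighted normalization (described in the context) on $(X,\epsilon,\sigma)$. Let $P=\{\mathbf{p}_1,\ldots,\mathbf{p}_N\}\subset\mathbb{R}^n$ be perturbations and $X+P=\{\mathbf{x}_1+\mathbf{p}_1,\ldots,\mathbf{x}_N+\mathbf{p}_N\}$, and put $\|P\|_{\max}=\max_i\|\mathbf{p}_i\|$. If $g\in G$ is gradient-weighted unitary, then $$\|g(X+P)\|\le\epsilon+\|P\|_{\max}\deg(g)\sqrt{|X|}+o(\|P\|_{\max})\quad\text{as }\|P\|_{\max}\to0.$$
   Context: For a polynomial $h$, $h(X)=(h(\mathbf{x}_1),\ldots,h(\mathbf{x}_N))^\top$ and $\|\cdot\|$ is the Euclidean norm; $o(\cdot)$ is Landau's little-o. Gradient norm: $\|g\|_{g,X}=\sqrt{\sum_{\mathbf{x}\in X}\|\nabla g(\mathbf{x})\|^2}/\sqrt{\sum_{k=1}^n\deg_k(g)^2}$, and $0$ for constant $g$. Gradient-weighted norm of $g=\sum_ic_it_i$ (distinct terms $t_i$): $\|g\|_{\mathrm{gw},X}=\sqrt{\sum_ic_i^2\|t_i\|_{g,X}^2}$; gradient-weighted unitary means this equals $1$. Border of a set of terms: $\partial\mathcal{O}=(\bigcup_kx_k\mathcal{O})\setminus\mathcal{O}$. ABM algorithm with gradient-weighted normalization, input $(X,\epsilon,\sigma)$: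 initialize $G=\emptyset$, $\mathcal{O}=\{1\}$. For $d=1,2,\ldots$: set $L=\{b\in\partial\mathcal{O}:\deg b=d\}$; if $L=\emptyset$, output $(\mathcal{O},G)$ and stop. Otherwise repeat until $L$ is empty: (S1) take the $\sigma$-smallest $b\in L$ and remove it; (S2) with current $\mathcal{O}=\{o_1,\ldots,o_s\}$, let $M=(b(X)\ o_1(X)\ \cdots\ o_s(X))$, $D=\mathrm{diag}(\|b\|_{\mathrm{gw},X},\|o_1\|_{\mathrm{gw},X},\ldots,\|o_s\|_{\mathrm{gw},X})$, and compute the smallest generalized eigenvalue $\lambda_{\min}$ and eigenvector $\mathbf{v}_{\min}=(v_1,\ldots,v_{s+1})^\top$ of $M^\top M\mathbf{v}=\lambda D^2\mathbf{v}$ with $\mathbf{v}_{\min}^\top D^2\mathbf{v}_{\min}=1$; (S3) if $\sqrt{\lambda_{\min}}\le\epsilon$, add $g=v_1b+v_2o_1+\cdots+v_{s+1}o_s$ to $G$; else add $b$ to $\mathcal{O}$. *)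

From HB Require Import structures.
From mathcomp Require Import all_boot all_order all_algebra.
From mathcomp Require Import reals.
From mathcomp Require Import mpoly.

Set Implicit Arguments.
Unset Strict Implicit.
Unset Printing Implicit Defensive.

Import Order.TTheory GRing.Theory Num.Theory.
Local Open Scope ring_scope.

Section ABM.
Variables (R : realType) (n N : nat).

(* Terms (monomials) in n variables are the multinomials 'X_{1..n};      *)
(* the term associated with m is the polynomial 'X_[m].                  *)
(* Data points: X j is the point x_{j+1} in R^n, j : 'I_N.               *)

Definition vnorm (k : nat) (v : 'I_k -> R) : R := Num.sqrt (\sum_(i < k) v i ^+ 2).

Definition evalX (X : 'I_N -> 'I_n -> R) (h : {mpoly R[n]}) : 'I_N -> R :=
  fun j => h.@[X j].

Definition deg (h : {mpoly R[n]}) : nat := (msize h).-1.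
Definition degk (h : {mpoly R[n]}) (k : 'I_n) : nat := \max_(m <- msupp h) m k.

Definition gradnorm (X : 'I_N -> 'I_n -> R) (h : {mpoly R[n]}) : R :=
  if deg h == 0%N then 0 else
  Num.sqrt (\sum_(j < N) \sum_(k < n) ((mderiv k h).@[X j]) ^+ 2)
  / Num.sqrt (\sum_(k < n) ((degk h k)%:R) ^+ 2).

Definition gwnorm (X : 'I_N -> 'I_n -> R) (h : {mpoly R[n]}) : R :=
  Num.sqrt (\sum_(m <- msupp h) (h@_m) ^+ 2 * (gradnorm X 'X_[m]) ^+ 2).

Definition gw_unitary (X : 'I_N -> 'I_n -> R) (h : {mpoly R[n]}) : Prop :=
  gwnorm X h = 1.

Definition term_ordering (le : rel 'X_{1..n}) : Prop :=
  [/\ [/\ reflexive le, antisymmetric le, transitive le & total le],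
      (forall m, le 0%MM m) &
      (forall m1 m2 m, le m1 m2 -> le (m1 + m)%MM (m2 + m)%MM)].

Definition degree_compatible (le : rel 'X_{1..n}) : Prop :=
  forall m1 m2, (mdeg m1 < mdeg m2)%N -> le m1 m2 /\ m1 != m2.

Definition in_border (O : seq 'X_{1..n}) (b : 'X_{1..n}) : bool :=
  (b \notin O) && [exists k : 'I_n, has (fun o => b == (o + U_(k))%MM) O].

Definition border_deg_list (le : rel 'X_{1..n}) (O : seq 'X_{1..n}) (d : nat)
    (L : seq 'X_{1..n}) : Prop :=
  [/\ uniq L, sorted le L &
      forall b, (b \in L) = in_border O b && (mdeg b == d)].

Definition Mmat (X : 'I_N -> 'I_n -> R) (cols : seq 'X_{1..n}) : 'M[R]_(N, size cols) :=
  \matrix_(j < N, c < size cols) ('X_[nth 0%MM cols c]).@[X j].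

Definition Dmat (X : 'I_N -> 'I_n -> R) (cols : seq 'X_{1..n}) : 'M[R]_(size cols) :=
  diag_mx (\row_(c < size cols) gwnorm X 'X_[nth 0%MM cols c]).

Definition gen_eigpair (k : nat) (A B : 'M[R]_k) (mu : R) (w : 'cV[R]_k) : Prop :=
  w != 0 /\ A *m w = mu *: (B *m w).

Definition min_gen_eigpair (k : nat) (A B : 'M[R]_k) (lam : R) (v : 'cV[R]_k) : Prop :=
  [/\ A *m v = lam *: (B *m v), v^T *m B *m v = 1%:M &
      forall mu w, gen_eigpair A B mu w -> lam <= mu].

Definition comb (cols : seq 'X_{1..n}) (v : 'cV[R]_(size cols)) : {mpoly R[n]} :=
  \sum_(c < size cols) v c ord0 *: 'X_[nth 0%MM cols c].

Inductive abm_step (X : 'I_N -> 'I_n -> R) (eps : R) (b : 'X_{1..n}) :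
  seq 'X_{1..n} * seq {mpoly R[n]} -> seq 'X_{1..n} * seq {mpoly R[n]} -> Prop :=
| abm_step_G (O : seq 'X_{1..n}) (G : seq {mpoly R[n]}) (lam : R)
    (v : 'cV[R]_(size (b :: O))) :
    min_gen_eigpair ((Mmat X (b :: O))^T *m Mmat X (b :: O))
                    (Dmat X (b :: O) *m Dmat X (b :: O)) lam v ->
    Num.sqrt lam <= eps ->
    abm_step X eps b (O, G) (O, rcons G (comb v))
| abm_step_O (O : seq 'X_{1..n}) (G : seq {mpoly R[n]}) (lam : R)
    (v : 'cV[R]_(size (b :: O))) :
    min_gen_eigpair ((Mmat X (b :: O))^T *m Mmat X (b :: O))
                    (Dmat X (b :: O) *m Dmat X (b :: O)) lam v ->
    eps < Num.sqrt lam ->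
    abm_step X eps b (O, G) (rcons O b, G).

Inductive abm_deg (X : 'I_N -> 'I_n -> R) (eps : R) :
  seq 'X_{1..n} -> seq 'X_{1..n} * seq {mpoly R[n]} ->
  seq 'X_{1..n} * seq {mpoly R[n]} -> Prop :=
| abm_deg_nil s : abm_deg X eps [::] s s
| abm_deg_cons b L s s' s'' :
    abm_step X eps b s s' -> abm_deg X eps L s' s'' -> abm_deg X eps (b :: L) s s''.

Inductive abm_from (X : 'I_N -> 'I_n -> R) (eps : R) (le : rel 'X_{1..n}) :
  nat -> seq 'X_{1..n} * seq {mpoly R[n]} ->
  seq 'X_{1..n} * seq {mpoly R[n]} -> Prop :=
| abm_from_stop d s :
    border_deg_list le s.1 d [::] -> abm_from X eps le d s s
| abm_from_next d s L s' out :
    L != [::] -> border_deg_list le s.1 d L -> abm_deg X eps L s s' ->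
    abm_from X eps le d.+1 s' out -> abm_from X eps le d s out.

Definition abm_output (X : 'I_N -> 'I_n -> R) (eps : R) (le : rel 'X_{1..n})
    (O : seq 'X_{1..n}) (G : seq {mpoly R[n]}) : Prop :=
  abm_from X eps le 1 ([:: 0%MM], [::]) (O, G).

Definition addP (X P : 'I_N -> 'I_n -> R) : 'I_N -> 'I_n -> R :=
  fun j k => X j k + P j k.

Definition Pmax (P : 'I_N -> 'I_n -> R) : R :=
  \big[Num.max/0]_(j < N) vnorm (P j).

End ABM.

(* Each g in G is created at a step where the smallest generalized eigenvalue
   lam of (M^T M, D^2) satisfies sqrt lam <= eps; since v^T D^2 v = 1, the
   evaluation vector g(X) = M v has norm sqrt lam <= eps.  A term is only added
   to O when no such small eigenvalue exists, which rules out more columns than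
   points (M would have a kernel vector, an eigenvector for 0); hence g has at
   most |X| nonconstant terms.
   Polynomials have a quadratic Taylor remainder, so ||g(X+P)|| <= ||g(X)|| +
   ||P||_max ||grad g(X)|| + O(||P||_max^2).  Writing g = sum_t c_t t, each term
   satisfies ||grad t(X)|| <= deg(g) ||t||_{g,X}, and Cauchy-Schwarz over the at
   most |X| nonconstant terms gives ||grad g(X)|| <= deg(g) sqrt|X| ||g||_gw. *)

From HB Require Import structures.
From mathcomp Require Import all_boot all_order all_algebra.
From mathcomp Require Import reals.
From mathcomp Require Import mpoly.
From mathcomp Require Import lra zify ring.
Import Order.TTheory GRing.Theory Num.Theory.
Local Open Scope ring_scope.

Lemma count_le_uniq [T : eqType] (a : pred T) [s t : seq T] :
  uniq s -> {subset s <= t} -> (count a s <= count a t)%N.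
Proof.
move=> s_uniq st; rewrite -!size_filter uniq_leq_size ?filter_uniq //.
by move=> x; rewrite !mem_filter => /andP[-> /st].
Qed.

Lemma count_predC1_lt [T : eqType] (x : T) (s : seq T) :
  x \in s -> (count (predC1 x) s < size s)%N.
Proof.
move=> xs; rewrite -(count_predC (pred1 x) s) addnC -[X in (X < _)%N]addn0.
by rewrite ltn_add2l -has_count has_pred1.
Qed.

Lemma sum_sqr_le_sqr_sum (I : Type) (r : seq I) (F : I -> nat) :
  (\sum_(i <- r) F i ^ 2 <= (\sum_(i <- r) F i) ^ 2)%N.
Proof. by elim: r => [|i r IH]; rewrite ?big_nil // !big_cons; nia. Qed.

Lemma sqrtr_le_sqr [R : rcfType] (x y : R) : 0 <= y -> x <= y ^+ 2 -> Num.sqrt x <= y.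
Proof.
move=> y_ge0 x_le; apply: le_trans (_ : Num.sqrt (y ^+ 2) <= y).
  by rewrite ler_wsqrtr.
by rewrite sqrtr_sqr ger0_norm.
Qed.

Section L2Norm.
Context {R : realType} {I : Type}.
Implicit Types (r : seq I) (f u v : I -> R).

Definition l2norm r f : R := Num.sqrt (\sum_(i <- r) f i ^+ 2).

Lemma sum_sqr_ge0 r f : 0 <= \sum_(i <- r) f i ^+ 2.
Proof. by apply: sumr_ge0 => i _; exact: sqr_ge0. Qed.

Lemma l2norm_ge0 r f : 0 <= l2norm r f.
Proof. exact: sqrtr_ge0. Qed.

Lemma sqr_l2norm r f : l2norm r f ^+ 2 = \sum_(i <- r) f i ^+ 2.
Proof. by rewrite sqr_sqrtr // sum_sqr_ge0. Qed.

Lemma sqr_sum_mul_le r u v :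
  (\sum_(i <- r) u i * v i) ^+ 2 <=
  (\sum_(i <- r) u i ^+ 2) * (\sum_(i <- r) v i ^+ 2).
Proof.
have sum_mul (a b : I -> R) : \sum_(i <- r) \sum_(j <- r) a i * b j =
    (\sum_(i <- r) a i) * (\sum_(j <- r) b j).
  by rewrite mulr_suml; apply: eq_bigr => i _; rewrite mulr_sumr.
have lagrange : \sum_(i <- r) \sum_(j <- r) (u i * v j - u j * v i) ^+ 2 =
    2 * ((\sum_(i <- r) u i ^+ 2) * (\sum_(i <- r) v i ^+ 2)
         - (\sum_(i <- r) u i * v i) ^+ 2).
  transitivity (\sum_(i <- r) \sum_(j <- r) (u i ^+ 2 * v j ^+ 2
      + (v i ^+ 2 * u j ^+ 2 - 2 * (u i * v i) * (u j * v j)))).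
    by apply: eq_bigr => i _; apply: eq_bigr => j _; ring.
  under eq_bigr do rewrite big_split sumrB -mulr_sumr.
  by rewrite big_split sumrB /= !sum_mul -mulr_suml -mulr_sumr; ring.
have : 0 <= \sum_(i <- r) \sum_(j <- r) (u i * v j - u j * v i) ^+ 2.
  by apply: sumr_ge0 => i _; exact: sum_sqr_ge0.
by rewrite lagrange pmulr_rge0 // subr_ge0.
Qed.

Lemma normr_sum_mul_le r u v :
  `|\sum_(i <- r) u i * v i| <= l2norm r u * l2norm r v.
Proof.
rewrite -sqrtr_sqr; apply: sqrtr_le_sqr; first by rewrite mulr_ge0 ?l2norm_ge0.
by rewrite exprMn !sqr_l2norm sqr_sum_mul_le.
Qed.

Lemma l2normD r u v : l2norm r (fun i => u i + v i) <= l2norm r u + l2norm r v.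
Proof.
apply: sqrtr_le_sqr; first by rewrite addr_ge0 ?l2norm_ge0.
have -> : \sum_(i <- r) (u i + v i) ^+ 2 =
    \sum_(i <- r) u i ^+ 2 + 2 * \sum_(i <- r) u i * v i + \sum_(i <- r) v i ^+ 2.
  by rewrite mulr_sumr -!big_split /=; apply: eq_bigr => i _; ring.
rewrite sqrrD !sqr_l2norm lerD2r lerD2l -[leRHS]mulr_natl ler_pM2l //.
exact: le_trans (ler_norm _) (normr_sum_mul_le _ _ _).
Qed.

Lemma eq_l2norm r [u v : I -> R] : (forall i, u i = v i) -> l2norm r u = l2norm r v.
Proof. by move=> uv; rewrite /l2norm; under eq_bigr do rewrite uv. Qed.

Lemma l2normZ r c f : l2norm r (fun i => c * f i) = `|c| * l2norm r f.
Proof.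
rewrite /l2norm; under eq_bigr do rewrite exprMn.
by rewrite -mulr_sumr sqrtrM ?sqr_ge0 // sqrtr_sqr.
Qed.

Lemma l2norm_le r u v : (forall i, `|u i| <= v i) -> l2norm r u <= l2norm r v.
Proof.
move=> uv; rewrite ler_wsqrtr // ler_sum // => i _.
by rewrite -real_normK ?num_real // lerXn2r ?nnegrE ?(le_trans _ (uv i)).
Qed.

Lemma l2norm_sum [J : Type] (s : seq J) r (F : J -> I -> R) :
  l2norm r (fun i => \sum_(m <- s) F m i) <= \sum_(m <- s) l2norm r (F m).
Proof.
elim: s => [|m s IH].
  by rewrite big_nil /l2norm big1 ?sqrtr0 // => i _; rewrite big_nil expr0n.
rewrite big_cons (@eq_l2norm _ _ (fun i => F m i + \sum_(j <- s) F j i)) => [|i].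
  by apply: le_trans (l2normD _ _ _) _; rewrite lerD2l.
by rewrite big_cons.
Qed.

End L2Norm.

Section Taylor.
Context {R : realType} {n : nat}.
Implicit Types (h : {mpoly R[n]}) (x p : 'I_n -> R).

Definition mgrad h x : 'I_n -> R := fun k => (mderiv k h).@[x].

Definition taylor_lin h x p : R := \sum_(k < n) mgrad h x k * p k.

Definition taylor_rem h x p : R :=
  h.@[fun k => x k + p k] - h.@[x] - taylor_lin h x p.

Definition quadratic_remainder h : Prop :=
  exists2 C : ('I_n -> R) -> R, (forall x, 0 <= C x) &
    forall x p, vnorm p <= 1 -> `|taylor_rem h x p| <= C x * vnorm p ^+ 2.

Lemma normr_taylor_lin_le h x p : `|taylor_lin h x p| <= vnorm (mgrad h x) * vnorm p.
Proof. exact: normr_sum_mul_le. Qed.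

Lemma quadratic_remainder_affine h :
  (forall x p, taylor_rem h x p = 0) -> quadratic_remainder h.
Proof. by move=> rem0; exists (fun=> 0) => // x p _; rewrite rem0 normr0 mul0r. Qed.

Lemma quadratic_remainderC c : quadratic_remainder c%:MP.
Proof.
apply: quadratic_remainder_affine => x p.
rewrite /taylor_rem /taylor_lin !mevalC big1 ?subrr ?subr0 // => k _.
by rewrite /mgrad mderivC meval0 mul0r.
Qed.

Lemma mgradXU i x k : mgrad 'X_i x k = (i == k)%:R.
Proof.
rewrite /mgrad mderivX mevalZ mnm1E; case: eqP => [<-|_]; last by rewrite mul0r.
by rewrite -{1}[U_(i)%MM]add0m addmK mpolyX0 meval1 mulr1.
Qed.

Lemma quadratic_remainderXU i : quadratic_remainder 'X_i.
Proof.
apply: quadratic_remainder_affine => x p.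
rewrite /taylor_rem /taylor_lin !mevalXU (bigD1 i) //= big1 => [|k ki].
  by rewrite mgradXU eqxx mul1r addr0 /=; ring.
by rewrite mgradXU eq_sym (negbTE ki) mul0r.
Qed.

Lemma taylor_remD h1 h2 x p :
  taylor_rem (h1 + h2) x p = taylor_rem h1 x p + taylor_rem h2 x p.
Proof.
rewrite /taylor_rem /taylor_lin !mevalD.
under eq_bigr do rewrite /mgrad mderivD mevalD mulrDl.
by rewrite big_split /=; ring.
Qed.

Lemma taylor_remZ c h x p : taylor_rem (c *: h) x p = c * taylor_rem h x p.
Proof.
rewrite /taylor_rem /taylor_lin !mevalZ.
under eq_bigr do rewrite /mgrad mderivZ mevalZ -mulrA.
by rewrite -mulr_sumr; ring.
Qed.

Lemma taylor_remM h1 h2 x p :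
  let l1 := taylor_lin h1 x p + taylor_rem h1 x p in
  let l2 := taylor_lin h2 x p + taylor_rem h2 x p in
  taylor_rem (h1 * h2) x p =
    l1 * l2 + h1.@[x] * taylor_rem h2 x p + h2.@[x] * taylor_rem h1 x p.
Proof.
have lin_prod : taylor_lin (h1 * h2) x p =
    h2.@[x] * taylor_lin h1 x p + h1.@[x] * taylor_lin h2 x p.
  rewrite /taylor_lin !mulr_sumr -big_split; apply: eq_bigr => k _ /=.
  by rewrite /mgrad mderivM mevalD !mevalM; ring.
by rewrite /= /taylor_rem lin_prod !mevalM; ring.
Qed.

Lemma quadratic_remainderD h1 h2 :
  quadratic_remainder h1 -> quadratic_remainder h2 -> quadratic_remainder (h1 + h2).
Proof.
move=> [C1 C1_ge0 rem1] [C2 C2_ge0 rem2].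
exists (fun x => C1 x + C2 x) => [x|x p p_le1]; first by rewrite addr_ge0.
rewrite taylor_remD mulrDl; apply: le_trans (ler_normD _ _) _.
by rewrite lerD ?rem1 ?rem2.
Qed.

Lemma quadratic_remainderZ c h : quadratic_remainder h -> quadratic_remainder (c *: h).
Proof.
move=> [C C_ge0 rem]; exists (fun x => `|c| * C x) => [x|x p p_le1].
  by rewrite mulr_ge0.
by rewrite taylor_remZ normrM -mulrA ler_wpM2l ?rem.
Qed.

Lemma quadratic_remainderM h1 h2 :
  quadratic_remainder h1 -> quadratic_remainder h2 -> quadratic_remainder (h1 * h2).
Proof.
move=> [C1 C1_ge0 rem1] [C2 C2_ge0 rem2].
pose K h x := vnorm (mgrad h x).
exists (fun x => (K h1 x + C1 x) * (K h2 x + C2 x)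
                 + `|h1.@[x]| * C2 x + `|h2.@[x]| * C1 x).
  by move=> x; rewrite !addr_ge0 ?mulr_ge0 ?addr_ge0 ?sqrtr_ge0.
move=> x p p_le1; set t := vnorm p.
have t_ge0 : 0 <= t := sqrtr_ge0 _.
(* as [t <= 1], the remainder bound [C t^2] is also a first-order bound [C t] *)
have first_order h C : 0 <= C x ->
    `|taylor_rem h x p| <= C x * t ^+ 2 ->
    `|taylor_lin h x p + taylor_rem h x p| <= (K h x + C x) * t.
  move=> C_ge0 remh; apply: le_trans (ler_normD _ _) _.
  rewrite mulrDl lerD ?normr_taylor_lin_le //; apply: le_trans remh _.
  by rewrite ler_wpM2l // expr2 ler_piMl.
rewrite taylor_remM; apply: le_trans (ler_normD _ _) _.
apply: le_trans (lerD (ler_normD _ _) (lexx _)) _; rewrite !normrM.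
apply: le_trans (_ : (K h1 x + C1 x) * t * ((K h2 x + C2 x) * t)
    + `|h1.@[x]| * (C2 x * t ^+ 2) + `|h2.@[x]| * (C1 x * t ^+ 2) <= _); last first.
  by rewrite le_eqVlt; apply/orP; left; apply/eqP; ring.
rewrite !lerD ?ler_wpM2l ?rem1 ?rem2 //.
by rewrite ler_pM ?normr_ge0 ?first_order ?rem1 ?rem2.
Qed.

Lemma mpoly_quadratic_remainder h : quadratic_remainder h.
Proof.
rewrite (mpolyE h); apply: big_ind => [||m _].
- by rewrite -mpolyC0; exact: quadratic_remainderC.
- exact: quadratic_remainderD.
apply: quadratic_remainderZ; rewrite mpolyXE_id; apply: big_ind => [||i _].
- by rewrite -mpolyC1; exact: quadratic_remainderC.
- exact: quadratic_remainderM.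
elim: (m i) => [|k IH]; first by rewrite expr0 -mpolyC1; exact: quadratic_remainderC.
by rewrite exprS; apply: quadratic_remainderM => //; exact: quadratic_remainderXU.
Qed.

End Taylor.

Section ABMInvariant.
Context {R : realType} {n N : nat} (X : 'I_N -> 'I_n -> R).

Lemma evalX_comb [cols : seq 'X_{1..n}] (v : 'cV[R]_(size cols)) j :
  evalX X (comb v) j = (Mmat X cols *m v) j ord0.
Proof.
rewrite /evalX /comb raddf_sum /= mxE; apply: eq_bigr => c _.
by rewrite mevalZ mxE mulrC.
Qed.

Lemma msupp_comb [cols : seq 'X_{1..n}] (v : 'cV[R]_(size cols)) :
  {subset msupp (comb v) <= cols}.
Proof.
move=> m; rewrite mcoeff_msupp; apply: contraR => m_cols; apply/eqP.
rewrite /comb raddf_sum /= big1 // => c _.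
rewrite mcoeffZ mcoeffX; case: eqP => [cm|]; last by rewrite mulr0.
by move: m_cols; rewrite -cm mem_nth.
Qed.

Section MinEigenpair.
Context {cols : seq 'X_{1..n}} {B : 'M[R]_(size cols)} {lam : R}.
Context {v : 'cV[R]_(size cols)}.
Hypothesis eig : min_gen_eigpair ((Mmat X cols)^T *m Mmat X cols) B lam v.

(* [v^T M^T M v = lam v^T B v = lam] *)
Lemma min_gen_eigpair_sqr_norm : vnorm (evalX X (comb v)) ^+ 2 = lam.
Proof.
case: eig => eigv vBv _; set M := Mmat X cols.
have Mv2 : (M *m v)^T *m (M *m v) = lam%:M.
  by rewrite trmx_mul -mulmxA (mulmxA M^T) eigv -scalemxAr mulmxA vBv scalemx1.
rewrite sqr_sqrtr ?sum_sqr_ge0 //.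
move/matrixP/(_ ord0 ord0): Mv2; rewrite !mxE eqxx mulr1n => <-.
by apply: eq_bigr => j _; rewrite evalX_comb !mxE expr2.
Qed.

Lemma min_gen_eigval_ge0 : 0 <= lam.
Proof. by rewrite -min_gen_eigpair_sqr_norm sqr_ge0. Qed.

Lemma vnorm_evalX_comb : vnorm (evalX X (comb v)) = Num.sqrt lam.
Proof. by rewrite -min_gen_eigpair_sqr_norm sqrtr_sqr ger0_norm ?sqrtr_ge0. Qed.

(* [M] then has a kernel vector [w], and [(0, w)] is a generalized eigenpair *)
Lemma min_gen_eigval_eq0 : (N < size cols)%N -> lam = 0.
Proof.
move=> N_lt; set M := Mmat X cols; set w := (nz_row (kermx M^T))^T.
have w_neq0 : w != 0.
  rewrite -(inj_eq (@trmx_inj _ _ _)) trmxK trmx0 nz_row_eq0 -mxrank_eq0.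
  by rewrite mxrank_ker; have := rank_leq_col M^T; lia.
have Mw0 : M *m w = 0.
  apply: trmx_inj; rewrite trmx_mul trmxK trmx0.
  by apply/sub_kermxP; exact: nz_row_sub.
case: eig => _ _ /(_ 0 w) lam_le0; apply/eqP; rewrite eq_le min_gen_eigval_ge0 andbT.
by apply: lam_le0; split; rewrite // scale0r -mulmxA Mw0 mulmx0.
Qed.

End MinEigenpair.

Variable eps : R.
Hypothesis eps_ge0 : 0 <= eps.

Definition abm_invariant (s : seq 'X_{1..n} * seq {mpoly R[n]}) :=
  [/\ 0%MM \in s.1, (size s.1 <= N)%N,
      {in s.2, forall g, vnorm (evalX X g) <= eps} &
      {in s.2, forall g, count (predC1 0%MM) (msupp g) <= N}%N].

Lemma abm_step_invariant b s s' :
  abm_step X eps b s s' -> abm_invariant s -> abm_invariant s'.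
Proof.
case=> [O G lam v eig lam_le | O G lam v eig lam_gt] [/= O0 O_size Gres Gcount].
- split=> //= g; rewrite mem_rcons inE => /predU1P[->|gG].
  + by rewrite (vnorm_evalX_comb eig).
  + exact: Gres.
  + apply: leq_trans (count_le_uniq _ (msupp_uniq _) (msupp_comb v)) _.
    apply: leq_trans O_size; rewrite -ltnS.
    by apply: count_predC1_lt; rewrite inE O0 orbT.
  + exact: Gcount.
- split=> //=; first by rewrite mem_rcons inE O0 orbT.
  rewrite size_rcons leqNgt; apply/negP => N_lt.
  by move: lam_gt; rewrite (min_gen_eigval_eq0 eig N_lt) sqrtr0 ltNge eps_ge0.
Qed.

Lemma abm_deg_invariant L s s' :
  abm_deg X eps L s s' -> abm_invariant s -> abm_invariant s'.
Proof. by elim=> // b {}L s0 s1 s2 /abm_step_invariant step _ IH /step. Qed.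

Lemma abm_from_invariant le d s out :
  abm_from X eps le d s out -> abm_invariant s -> abm_invariant out.
Proof. by elim=> // {}d s0 L s1 out0 _ _ /abm_deg_invariant step _ IH /step. Qed.

Lemma abm_output_invariant [le O G] : (0 < N)%N ->
  abm_output X eps le O G -> abm_invariant (O, G).
Proof.
by move=> N_gt0 /abm_from_invariant; apply; split; rewrite ?mem_seq1.
Qed.

End ABMInvariant.

Section Gradient.
Context {R : realType} {n N : nat} (X : 'I_N -> 'I_n -> R).

Definition grad_l2norm (g : {mpoly R[n]}) : R :=
  Num.sqrt (\sum_(j < N) \sum_(k < n) mgrad g (X j) k ^+ 2).

Lemma grad_l2norm_pairs g :
  grad_l2norm g =
    l2norm (index_enum ('I_N * 'I_n)%type) (fun jk => mgrad g (X jk.1) jk.2).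
Proof. by rewrite /grad_l2norm pair_big. Qed.

Lemma mgrad_mpolyE g x k :
  mgrad g x k = \sum_(m <- msupp g) g@_m * mgrad ('X_[m] : {mpoly R[n]}) x k.
Proof.
rewrite /mgrad [in LHS](mpolyE g) (raddf_sum (mderiv k)) (raddf_sum (meval x)).
apply: eq_bigr => m _; rewrite -mevalZ; congr meval; exact: mderivZ.
Qed.

Lemma grad_l2norm_le_sum g :
  grad_l2norm g <= \sum_(m <- msupp g) `|g@_m| * grad_l2norm 'X_[m].
Proof.
rewrite grad_l2norm_pairs (eq_l2norm _ (fun jk => mgrad_mpolyE g _ _)).
apply: le_trans (l2norm_sum _ _ _) _; apply: ler_sum => m _.
by rewrite l2normZ grad_l2norm_pairs.
Qed.

Lemma deg_mpolyX m : deg ('X_[m] : {mpoly R[n]}) = mdeg m.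
Proof. by rewrite /deg msizeX. Qed.

Lemma degk_mpolyX m k : degk ('X_[m] : {mpoly R[n]}) k = m k.
Proof. by rewrite /degk msuppX big_seq1. Qed.

Lemma mdeg_le_deg (g : {mpoly R[n]}) m : m \in msupp g -> (mdeg m <= deg g)%N.
Proof. by move/msize_mdeg_lt; rewrite /deg; lia. Qed.

Lemma vnorm_mnm_le (m : 'X_{1..n}) : vnorm (fun k => ((m k)%:R : R)) <= (mdeg m)%:R.
Proof.
apply: sqrtr_le_sqr => //; under eq_bigr do rewrite -natrX.
by rewrite -natr_sum -natrX ler_nat mdegE sum_sqr_le_sqr_sum.
Qed.

Lemma grad_l2norm_mpolyX (m : 'X_{1..n}) :
  grad_l2norm 'X_[m] = gradnorm X 'X_[m] * vnorm (fun k => ((m k)%:R : R)).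
Proof.
rewrite /gradnorm deg_mpolyX mdeg_eq0; have [->|m_neq0] := eqVneq m 0%MM.
  rewrite mul0r /grad_l2norm big1 ?sqrtr0 // => j _; rewrite big1 // => k _.
  by rewrite /mgrad mpolyX0 -mpolyC1 mderivC meval0 expr0n.
have [k mk_neq0] : exists k, m k != 0%N.
  apply/existsP; apply: contraNT m_neq0; rewrite negb_exists => /forallP m0.
  by apply/eqP/mnmP => k; rewrite mnm0E; apply/eqP/negPn.
have -> : \sum_(k < n) ((degk ('X_[m] : {mpoly R[n]}) k)%:R : R) ^+ 2 =
    \sum_(k < n) (m k)%:R ^+ 2 by apply: eq_bigr => i _; rewrite degk_mpolyX.
rewrite divfK // sqrtr_eq0 -ltNge (bigD1 k) //= ltr_pwDl //.
  by rewrite exprn_gt0 // ltr0n lt0n.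
by apply: sumr_ge0 => i _; exact: sqr_ge0.
Qed.

Lemma grad_l2norm_le g : gw_unitary X g ->
  (count (predC1 0%MM) (msupp g) <= N)%N ->
  grad_l2norm g <= (deg g)%:R * Num.sqrt N%:R.
Proof.
move=> gw count_le; apply: le_trans (grad_l2norm_le_sum g) _.
under eq_bigr do rewrite grad_l2norm_mpolyX mulrA.
apply: le_trans (le_trans (ler_norm _) (normr_sum_mul_le _ _ _)) _.
have -> : l2norm (msupp g) (fun m => `|g@_m| * gradnorm X 'X_[m]) = 1.
  rewrite -gw /gwnorm /l2norm; congr Num.sqrt; apply: eq_bigr => m _.
  by rewrite exprMn real_normK ?num_real.
have term_le m : m \in msupp g ->
    vnorm (fun k => ((m k)%:R : R)) ^+ 2 <= (m != 0%MM)%:R * (deg g)%:R ^+ 2.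
  have [->|_] := eqVneq m 0%MM => [_|mg].
    by rewrite mul0r /vnorm big1 ?sqrtr0 ?expr0n // => k _; rewrite mnm0E expr0n.
  rewrite mul1r lerXn2r ?nnegrE ?sqrtr_ge0 ?ler0n //.
  by rewrite (le_trans (vnorm_mnm_le m)) // ler_nat mdeg_le_deg.
rewrite mul1r; apply: sqrtr_le_sqr; first by rewrite mulr_ge0 ?sqrtr_ge0.
rewrite big_seq (le_trans (ler_sum _ term_le)) // -big_seq -mulr_suml.
rewrite exprMn sqr_sqrtr ?ler0n // mulrC ler_wpM2l ?exprn_ge0 ?ler0n //.
rewrite -natr_sum ler_nat (leq_trans _ count_le) //.
by rewrite -sum1_count [leqRHS]big_mkcond.
Qed.

End Gradient.

Section Perturbation.
Context {R : realType} {n N : nat} (X : 'I_N -> 'I_n -> R) (g : {mpoly R[n]}).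

Lemma Pmax_ge0 (P : 'I_N -> 'I_n -> R) : 0 <= Pmax P.
Proof. exact: bigmax_ge_id. Qed.

Lemma vnorm_le_Pmax (P : 'I_N -> 'I_n -> R) j : vnorm (P j) <= Pmax P.
Proof. exact: le_bigmax. Qed.

Lemma evalX_addP_taylor P j : evalX (addP X P) g j =
  g.@[X j] + taylor_lin g (X j) (P j) + taylor_rem g (X j) (P j).
Proof. by rewrite /taylor_rem /evalX /addP; ring. Qed.

Lemma vnorm_taylor_lin_le P :
  vnorm (fun j => taylor_lin g (X j) (P j)) <= Pmax P * grad_l2norm X g.
Proof.
apply: le_trans (l2norm_le _ _ (fun j => Pmax P * vnorm (mgrad g (X j))) _) _.
  move=> j; rewrite mulrC; apply: le_trans (normr_taylor_lin_le _ _ _) _.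
  by rewrite ler_wpM2l ?sqrtr_ge0 ?vnorm_le_Pmax.
rewrite l2normZ ger0_norm ?Pmax_ge0 // ler_wpM2l ?Pmax_ge0 //.
rewrite ler_wsqrtr // ler_sum // => j _.
by rewrite sqr_sqrtr //; exact: sum_sqr_ge0.
Qed.

Lemma vnorm_taylor_rem_le C P : 0 <= C ->
  (forall j p, vnorm p <= 1 -> `|taylor_rem g (X j) p| <= C * vnorm p ^+ 2) ->
  Pmax P <= 1 ->
  vnorm (fun j => taylor_rem g (X j) (P j)) <= Num.sqrt N%:R * (C * Pmax P ^+ 2).
Proof.
move=> C_ge0 remC P_le1.
have P_le j : vnorm (P j) <= 1 := le_trans (vnorm_le_Pmax P j) P_le1.
apply: le_trans (l2norm_le _ _ (fun=> C * Pmax P ^+ 2) _) _ => [j|].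
  apply: le_trans (remC j _ (P_le j)) _; rewrite ler_wpM2l //.
  by rewrite lerXn2r ?nnegrE ?sqrtr_ge0 ?Pmax_ge0 ?vnorm_le_Pmax.
rewrite /l2norm sumr_const card_ord -[_ ^+ 2 *+ N]mulr_natr.
rewrite sqrtrM ?sqr_ge0 // sqrtr_sqr.
by rewrite ger0_norm 1?mulrC // mulr_ge0 ?sqr_ge0.
Qed.

Lemma evalX_addP_le [eta : R] : 0 < eta ->
  exists2 delta : R, 0 < delta & forall P, Pmax P <= delta ->
    vnorm (evalX (addP X P) g)
      <= vnorm (evalX X g) + Pmax P * grad_l2norm X g + eta * Pmax P.
Proof.
move=> eta_gt0; have [C C_ge0 remC] := mpoly_quadratic_remainder g.
set Cmax := \sum_(j < N) C (X j).
have Cmax_ge0 : 0 <= Cmax by exact: sumr_ge0.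
have remCmax j p : vnorm p <= 1 ->
    `|taylor_rem g (X j) p| <= Cmax * vnorm p ^+ 2.
  move=> p_le1; apply: le_trans (remC _ _ p_le1) _; rewrite ler_wpM2r ?sqr_ge0 //.
  by rewrite /Cmax (bigD1 j) //= lerDl sumr_ge0.
set K := Num.sqrt N%:R * Cmax.
have K_ge0 : 0 <= K by rewrite mulr_ge0 ?sqrtr_ge0.
exists (Num.min 1 (eta / (K + 1))) => [|P].
  by rewrite lt_min ltr01 divr_gt0 // ltr_wpDl.
rewrite le_min => /andP[P_le1 P_le]; have P_ge0 := Pmax_ge0 P.
have -> : vnorm (evalX (addP X P) g) = vnorm (fun j =>
    g.@[X j] + taylor_lin g (X j) (P j) + taylor_rem g (X j) (P j)) :=
  eq_l2norm _ (evalX_addP_taylor P).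
apply: le_trans (l2normD _ _ _) _; apply: lerD.
  by apply: le_trans (l2normD _ _ _) _; rewrite lerD2l vnorm_taylor_lin_le.
apply: le_trans (vnorm_taylor_rem_le _ _ Cmax_ge0 remCmax P_le1) _.
have KP_le : K * Pmax P <= eta.
  by move: P_le; rewrite ler_pdivlMr ?ltr_wpDl //; nra.
by rewrite mulrA -/K expr2 mulrA ler_wpM2r.
Qed.

End Perturbation.

Lemma abm_generator_bounds [R : realType] [n N : nat] [X : 'I_N -> 'I_n -> R]
    [eps : R] [le : rel 'X_{1..n}] [O : seq 'X_{1..n}] [G : seq {mpoly R[n]}]
    [g : {mpoly R[n]}] :
  0 <= eps -> abm_output X eps le O G -> g \in G -> gw_unitary X g ->
  vnorm (evalX X g) <= eps /\ grad_l2norm X g <= (deg g)%:R * Num.sqrt N%:R.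
Proof.
case: N X => [|N] X eps_ge0 out gG gw.
  by rewrite /vnorm /grad_l2norm !big_ord0 sqrtr0 mulr0.
have [_ _ small sparse] := abm_output_invariant X eps eps_ge0 (ltn0Sn N) out.
by split; [exact: small | exact: grad_l2norm_le gw (sparse g gG)].
Qed.

Theorem mainTheorem7 (R : realType) (n N : nat) (X : 'I_N -> 'I_n -> R)
    (eps : R) (sigma : rel 'X_{1..n})
    (O : seq 'X_{1..n}) (G : seq {mpoly R[n]}) (g : {mpoly R[n]}) :
  injective X -> 0 <= eps ->
  term_ordering sigma -> degree_compatible sigma ->
  abm_output X eps sigma O G ->
  g \in G -> gw_unitary X g ->
  forall eta : R, 0 < eta ->
  exists2 delta : R, 0 < delta &
    forall P : 'I_N -> 'I_n -> R, Pmax P <= delta ->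
      vnorm (evalX (addP X P) g)
        <= eps + Pmax P * (deg g)%:R * Num.sqrt N%:R + eta * Pmax P.
Proof.
move=> _ eps_ge0 _ _ out gG gw eta eta_gt0.
have [small grad_le] := abm_generator_bounds eps_ge0 out gG gw.
have [delta delta_gt0 perturb] := evalX_addP_le X g eta_gt0.
exists delta => // P P_le; apply: le_trans (perturb P P_le) _.
by rewrite lerD2r lerD // -mulrA ler_wpM2l // Pmax_ge0.
Qed.
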